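(* $E_3<_{\mathrm{Learn}}\mathbf{PL}$: every $E_3$-learnable family of structures is $\mathbf{PL}$-learnable, and there is a $\mathbf{PL}$-learnable family that is not $E_3$-learnable.
   Context: All structures are countable, have domain $\mathbb{N}$, are in a finite relational signature, and are identified with their atomic diagrams (elements of $2^{\mathbb{N}}$). A family of structures $\mathfrak{K}$ is a countable set of pairwise nonisomorphic such structures; $\mathcal{S}\restriction_s$ is the finite substructure on $\{0,\dots,s\}$; $\mathrm{LD}(\mathfrak{K})\subseteq2^{\mathbb{N}}$ is the set of structures with domain $\mathbb{N}$ isomorphic to a member of $\mathfrak{K}$ (subspace topology). For an equivalence relation $E$ on a space $X$, $\mathfrak{K}$ is $E$-learnable if there is a continuous $\Gamma:\mathrm{LD}(\mathfrak{K})\to X$ with $\mathcal{S}\cong\mathcal{S}'\iff\Gamma(\mathcal{S})E\Gamma(\mathcal{S}')$ on $\mathrm{LD}(\mathfrak{K})$. Fix a computable bijection $\langle\cdot,\cdot\rangle:\mathbb{N}^2\to\mathbb{N}$; $p^{[m]}(n)=p(\langle m,n\rangle)$ for $p\in\mathbb{N}^{\mathbb{N}\times\mathbb{N}}$; $p\,E_0\,q\iff\exists m\forall n\ge m\ p(n)=q(n)$; $p\,E_3\,q\iff\forall m\ p^{[m]}E_0q^{[m]}$. A learner is an arbitrary function from $\{\mathcal{S}\restriction_s:\mathcal{S}\in\mathrm{LD}(\mathfrak{K})\}$ to $\{\ulcorner\mathcal{A}\urcorner:\mathcal{A}\in\mathfrak{K}\}\cup\{?\}$. $\mathfrak{K}$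 is $\mathbf{PL}$-learnable if some learner $\mathbf{M}$ satisfies: for every $\mathcal{S}\in\mathrm{LD}(\mathfrak{K})$ and $\mathcal{A}\in\mathfrak{K}$, $\{n:\mathbf{M}(\mathcal{S}\restriction_n)=\ulcorner\mathcal{A}\urcorner\}$ is infinite iff $\mathcal{A}\cong\mathcal{S}$. $X<_{\mathrm{Learn}}Y$ means every $X$-learnable family is $Y$-learnable but not conversely. *)

From mathcomp Require Import all_boot.
From Stdlib Require Cantor.
Set Implicit Arguments. Unset Strict Implicit. Unset Printing Implicit Defensive.

(* A structure with domain nat in this signature: its relations, i.e. exactly
   the data of its atomic diagram. *)
Definition structure (k : nat) (ar : 'I_k -> nat) : Type :=
  forall i : 'I_k, ('I_(ar i) -> nat) -> bool.

Section Learn.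
Variables (k : nat) (ar : 'I_k -> nat).
Local Notation str := (structure ar).

Definition iso (A B : str) : Prop :=
  exists f : nat -> nat, bijective f /\
    forall (i : 'I_k) (t : 'I_(ar i) -> nat), A i t = B i (f \o t).

Definition restr_eq (s : nat) (A B : str) : Prop :=
  forall (i : 'I_k) (t : 'I_(ar i) -> nat), (forall j, t j <= s) -> A i t = B i t.

Definition is_family (I : countType) (K : I -> str) : Prop :=
  forall a b : I, iso (K a) (K b) -> a = b.

Definition LD (I : countType) (K : I -> str) (A : str) : Prop :=
  exists a : I, iso A (K a).

(* Continuity of G : LD(K) -> nat^nat, LD(K) carrying the subspace topology of
   Cantor space of atomic diagrams (basic open sets: {A | A|_s = sigma}) and
   nat^nat the Baire space topology. *)
Definition continuous_on_LD (I : countType) (K : I -> str)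
    (G : str -> (nat -> nat)) : Prop :=
  forall A, LD K A -> forall n : nat, exists s : nat,
    forall B, LD K B -> restr_eq s A B -> G B n = G A n.

Definition E_learnable (E : (nat -> nat) -> (nat -> nat) -> Prop)
    (I : countType) (K : I -> str) : Prop :=
  exists G : str -> (nat -> nat), continuous_on_LD K G /\
    forall A B, LD K A -> LD K B -> (iso A B <-> E (G A) (G B)).

(* A learner: M s A is the learner's output on the finite structure A|_s
   (Some a = the code of K a, None = '?'); it may depend only on A|_s. *)
Definition is_learner (I : countType) (M : nat -> str -> option I) : Prop :=
  forall s A B, restr_eq s A B -> M s A = M s B.

Definition PL_learnable (I : countType) (K : I -> str) : Prop :=
  exists M : nat -> str -> option I, is_learner M /\
    forall A, LD K A -> forall a : I,
      ((forall m, exists2 n, m <= n & M n A = Some a) <-> iso (K a) A).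

End Learn.

Definition pair (m n : nat) : nat := Cantor.to_nat (m, n).
Definition column (p : nat -> nat) (m : nat) : nat -> nat := fun n => p (pair m n).

Definition E0 (p q : nat -> nat) : Prop := exists m, forall n, m <= n -> p n = q n.
Definition E3 (p q : nat -> nat) : Prop := forall m, E0 (column p m) (column q m).

From Stdlib Require Import ClassicalEpsilon FunctionalExtensionality Classical.
From mathcomp Require Import all_boot zify.
Set Implicit Arguments. Unset Strict Implicit. Unset Printing Implicit Defensive.

(* E_3 <= PL: if G reduces isomorphism on LD(K) to E_3, then A is a copy of
   K a iff for every b <> a the image G A keeps disagreeing with G (K b) on a
   column where G (K a) and G (K b) are not E_0-equivalent.  By continuity
   each disagreement is seen on a finite part of A, so every isomorphism type
   is a Pi^0_2 condition, and a learner that outputs a at the least stage by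
   which the first t tests for a are passed outputs a infinitely often
   exactly on the copies of K a.

   PL </= E_3: the family consists of coloured matchings, classified up to
   isomorphism by their numbers of counters and of lone or matched anchors of
   two colours: two members with infinitely many counters (one without lone
   0-anchors, one without lone 3-anchors) and one with exactly n counters for
   each n.  Each type is Pi^0_2, hence PL-learnable.  Given a putative
   reduction G, some column m separates the two infinite members, and one of
   them, T, is separated on m from infinitely many finite members.
   Alternately extending a finite segment to such a finite member (which by
   continuity forces a fresh disagreement with G T on column m) and repairing
   it towards T builds a copy of T whose image is not E_3-equivalent to G T. *)

Definition asb (P : Prop) : bool := if excluded_middle_informative P then true else false.

Lemma asbP (P : Prop) : reflect P (asb P).
Proof. by rewrite /asb; case: excluded_middle_informative => h; constructor. Qed.

Lemma ex_minimal (P : nat -> Prop) :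
  (exists n, P n) -> exists n, P n /\ forall m, m < n -> ~ P m.
Proof.
move=> [n Pn]; have exb : exists n, asb (P n) by exists n; apply/asbP.
case: (ex_minnP exb) => m /asbP Pm minm; exists m; split=> // k ltkm /asbP Pk.
by have := minm k Pk; rewrite leqNgt ltkm.
Qed.

Lemma pair_ge m n : m <= pair m n /\ n <= pair m n.
Proof. have := Cantor.to_nat_non_decreasing m n; rewrite /pair; lia. Qed.

Lemma unpairK s : s = pair (Cantor.of_nat s).1 (Cantor.of_nat s).2.
Proof. by rewrite /pair -surjective_pairing Cantor.cancel_to_of. Qed.

Lemma pairK m n : Cantor.of_nat (pair m n) = (m, n).
Proof. exact: Cantor.cancel_of_to. Qed.

Lemma E0_sym p q : E0 p q -> E0 q p.
Proof. by case=> m h; exists m => n hn; rewrite h. Qed.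

Lemma E0_trans p q r : E0 p q -> E0 q r -> E0 p r.
Proof. case=> m1 h1 [m2 h2]; exists (maxn m1 m2) => n hn; rewrite h1 ?h2 //; lia. Qed.

Lemma not_E0_cofinal p q : ~ E0 p q -> forall N, exists n, N <= n /\ p n <> q n.
Proof.
move=> h N; apply: NNPP => h2; apply: h; exists N => n hn.
by apply: NNPP => h3; apply: h2; exists n.
Qed.

Lemma not_E3_column p q : ~ E3 p q -> exists m, ~ E0 (column p m) (column q m).
Proof. by move=> h; apply: NNPP => h2; apply: h => m; apply: NNPP => h3; apply: h2; exists m. Qed.

Section Structures.
Variables (k : nat) (ar : 'I_k -> nat).
Local Notation str := (structure ar).

Lemma restr_eq_refl s (A : str) : restr_eq s A A.
Proof. by []. Qed.

Lemma restr_eq_sym s (A B : str) : restr_eq s A B -> restr_eq s B A.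
Proof. by move=> h i t ht; rewrite h. Qed.

Lemma restr_eq_trans s (A B C : str) : restr_eq s A B -> restr_eq s B C -> restr_eq s A C.
Proof. by move=> h1 h2 i t ht; rewrite h1 // h2. Qed.

Lemma restr_eq_mono s s' (A B : str) : s <= s' -> restr_eq s' A B -> restr_eq s A B.
Proof. by move=> hs h i t ht; apply: h => j; apply: leq_trans (ht j) hs. Qed.

Lemma iso_refl (A : str) : iso A A.
Proof. by exists id; split; first exists id. Qed.

Lemma iso_sym (A B : str) : iso A B -> iso B A.
Proof.
case=> f [[g fK gK] h]; exists g; split; first by exists f.
move=> i t; rewrite h; congr (B i _); apply: functional_extensionality => x /=.
by rewrite gK.
Qed.

Lemma iso_trans (A B C : str) : iso A B -> iso B C -> iso A C.
Proof.
case=> f [bf h1] [g [bg h2]]; exists (g \o f); split; first exact: bij_comp.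
by move=> i t; rewrite h1 h2.
Qed.

Lemma LD_member (I : countType) (K : I -> str) a : LD K (K a).
Proof. by exists a; apply: iso_refl. Qed.

(** * Learning from a Pi^0_2 description of the isomorphism types *)

Section Pi2Learner.
Variables (I : countType) (K : I -> str).
Variable test : I -> nat -> nat -> str -> Prop.
Hypothesis test_local : forall a r u A B, restr_eq u A B -> test a r u A -> test a r u B.
Hypothesis test_mono : forall a r u v A, u <= v -> test a r u A -> test a r v A.
Hypothesis test_iso : forall A, LD K A ->
  forall a, iso (K a) A <-> forall r, exists u, test a r u A.

Definition passes_upto a t u A := forall r, r < t -> test a r u A.
Definition least_stage a t u A :=
  passes_upto a t u A /\ forall u', u' < u -> ~ passes_upto a t u' A.

Definition pi2_learner (s : nat) (A : str) : option I :=
  let (i, v) := Cantor.of_nat s in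
  let (t, u) := Cantor.of_nat v in
  if pickle_inv i is Some a then
    if excluded_middle_informative (least_stage a t u A) then Some a else None
  else None.

Lemma passes_upto_eventually a A t : (forall r, exists u, test a r u A) ->
  exists u0, forall u, u0 <= u -> passes_upto a t u A.
Proof.
move=> H; elim: t => [|t [u0 IH]]; first by exists 0 => u _ r.
case: (H t) => u1 h1; exists (maxn u0 u1) => u hu r hr.
case: (ltngtP r t) => hrt; [apply: IH => //; lia | lia | subst r; apply: test_mono h1; lia].
Qed.

Lemma least_stage_uniq a t u u' A : least_stage a t u A -> least_stage a t u' A -> u = u'.
Proof.
case=> h1 h2 [h1' h2']; case: (ltngtP u u') => // h.
- by case: (h2' _ h).
- by case: (h2 _ h).
Qed.

Lemma least_stage_bounded a A (g : nat -> nat -> nat) T :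
  exists B, forall t u, t < T -> least_stage a t u A -> g t u <= B.
Proof.
elim: T => [|T [B IH]]; first by exists 0.
case: (classic (exists u, least_stage a T u A)) => [[u hu]|hno].
- exists (maxn B (g T u)) => t u' ht hg.
  case: (ltngtP t T) => htT; [have := IH t u' htT hg; lia | lia |].
  by subst t; rewrite (least_stage_uniq hg hu); lia.
- exists B => t u' ht hg; case: (ltngtP t T) => htT; [exact: IH | lia |].
  by subst t; case: hno; exists u'.
Qed.

Lemma least_stage_local a t u A B :
  restr_eq u A B -> least_stage a t u A -> least_stage a t u B.
Proof.
move=> hAB; have hpass : forall u', u' <= u -> passes_upto a t u' A -> passes_upto a t u' B.
  move=> u' hu' h r hr; apply: test_local (h r hr); exact: restr_eq_mono hAB.
have hpass' : forall u', u' <= u -> passes_upto a t u' B -> passes_upto a t u' A.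
  move=> u' hu' h r hr; apply: test_local (h r hr).
  exact: restr_eq_mono hu' (restr_eq_sym hAB).
case=> h1 h2; split; first exact: hpass.
by move=> u' hu' h3; apply: (h2 u' hu'); apply: hpass' => //; apply: ltnW.
Qed.

Lemma pi2_learner_is_learner : is_learner pi2_learner.
Proof.
move=> s A B hAB; rewrite /pi2_learner.
case E1: (Cantor.of_nat s) => [i v]; case E2: (Cantor.of_nat v) => [t u].
case: (pickle_inv i) => [a|] //.
have hu : u <= s.
  have -> : s = pair i (pair t u) by rewrite [s]unpairK E1 [v]unpairK E2.
  by have := pair_ge i (pair t u); have := pair_ge t u; lia.
have hAB' := restr_eq_mono hu hAB.
have hl : least_stage a t u A <-> least_stage a t u B.
  by split; apply: least_stage_local => //; apply: restr_eq_sym.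
by case: excluded_middle_informative => hA; case: excluded_middle_informative => hB //;
  exfalso; tauto.
Qed.

Lemma pi2_learner_guesses a t u A :
  least_stage a t u A -> pi2_learner (pair (pickle a) (pair t u)) A = Some a.
Proof.
by move=> h; rewrite /pi2_learner !pairK pickleK_inv; case: excluded_middle_informative.
Qed.

Lemma pi2_learner_guess_inv s A a : pi2_learner s A = Some a ->
  exists t u, s = pair (pickle a) (pair t u) /\ least_stage a t u A.
Proof.
rewrite /pi2_learner [s]unpairK pairK; case: (Cantor.of_nat s) => i v /=.
rewrite [v]unpairK pairK; case: (Cantor.of_nat v) => t u /=.
case E: (pickle_inv i) => [a'|] //; case: excluded_middle_informative => // h [<-].
by exists t, u; have := @pickle_invK I i; rewrite E /= => ->.
Qed.

(* If some test r0 is failed at every stage, a least stage exists only for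
   t <= r0, where it is unique: a is then guessed only finitely often. *)
Lemma pi2_learner_finitely_often A a : LD K A -> ~ iso (K a) A ->
  exists B, forall n, pi2_learner n A = Some a -> n <= B.
Proof.
move=> hA hni.
have [r0 hr0] : exists r0, forall u, ~ test a r0 u A.
  apply: NNPP => h; apply: hni; apply/(test_iso hA) => r.
  by apply: NNPP => h2; apply: h; exists r => u hu; apply: h2; exists u.
have [B hB] := least_stage_bounded a A (fun t u => pair (pickle a) (pair t u)) r0.+1.
exists B => n /pi2_learner_guess_inv [t [u [-> hl]]]; apply: (hB t u _ hl).
by case: (leqP t r0) => // h; case: (hr0 u); apply: hl.1.
Qed.

Lemma pi2_learner_infinitely_often A a : LD K A -> iso (K a) A ->
  forall m, exists2 n, m <= n & pi2_learner n A = Some a.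
Proof.
move=> hA hiso m; have [u0 hu0] := passes_upto_eventually m (proj1 (test_iso hA a) hiso).
have [u [hpass hmin]] := @ex_minimal (fun u => passes_upto a m u A) (ex_intro _ u0 (hu0 _ (leqnn _))).
exists (pair (pickle a) (pair m u)); last exact: pi2_learner_guesses.
by have := pair_ge (pickle a) (pair m u); have := pair_ge m u; lia.
Qed.

Lemma pi2_PL_learnable : PL_learnable K.
Proof.
exists pi2_learner; split; first exact: pi2_learner_is_learner.
move=> A hA a; split; last exact: pi2_learner_infinitely_often.
move=> hinf; apply: NNPP => hni.
have [B hB] := pi2_learner_finitely_often hA hni.
by case: (hinf B.+1) => n hn /hB; lia.
Qed.

End Pi2Learner.
End Structures.

Section E3Learnable.
Variables (k : nat) (ar : 'I_k -> nat).
Local Notation str := (structure ar).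
Variables (I : countType) (K : I -> str).
Hypothesis K_family : is_family K.
Variable G : str -> nat -> nat.
Hypothesis G_cont : continuous_on_LD K G.
Hypothesis G_red : forall A B, LD K A -> LD K B -> (iso A B <-> E3 (G A) (G B)).

Definition sep_column a b : nat := epsilon (inhabits 0)
  (fun m => ~ E0 (column (G (K a)) m) (column (G (K b)) m)).

Lemma sep_columnP a b : a <> b ->
  ~ E0 (column (G (K a)) (sep_column a b)) (column (G (K b)) (sep_column a b)).
Proof.
move=> hab; apply: (epsilon_spec (inhabits 0)
  (fun m => ~ E0 (column (G (K a)) m) (column (G (K b)) m))).
apply: not_E3_column => h3; apply: hab; apply: K_family.
exact: (proj2 (G_red (LD_member K a) (LD_member K b))).
Qed.

Definition settled x c u (A : str) := forall B, LD K B -> restr_eq u A B -> G B x = c.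

(* Test number pair j N, for b with code j: beyond N, the value of G on
   column sep_column a b is settled by A|_u and differs from G (K b). *)
Definition E3_test a r u (A : str) :=
  let (j, N) := Cantor.of_nat r in
  forall b, pickle_inv j = Some b -> b <> a ->
    exists n, N <= n /\ exists c,
      c <> G (K b) (pair (sep_column a b) n) /\ settled (pair (sep_column a b) n) c u A.

Lemma E3_test_local a r u A B : restr_eq u A B -> E3_test a r u A -> E3_test a r u B.
Proof.
move=> hAB; rewrite /E3_test; case: (Cantor.of_nat r) => j N h b hb hba.
have [n [hn [c [hc hs]]]] := h b hb hba; exists n; split=> //; exists c; split=> //.
by move=> B' hB' hr; apply: hs => //; apply: restr_eq_trans hAB hr.
Qed.

Lemma E3_test_mono a r u v A : u <= v -> E3_test a r u A -> E3_test a r v A.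
Proof.
move=> huv; rewrite /E3_test; case: (Cantor.of_nat r) => j N h b hb hba.
have [n [hn [c [hc hs]]]] := h b hb hba; exists n; split=> //; exists c; split=> //.
by move=> B' hB' hr; apply: hs => //; apply: restr_eq_mono huv hr.
Qed.

Lemma E3_test_iso A : LD K A -> forall a, iso (K a) A -> forall r, exists u, E3_test a r u A.
Proof.
move=> hA a hiso r; rewrite /E3_test; case: (Cantor.of_nat r) => j N.
case hj: (pickle_inv j) => [b|]; last by exists 0.
case: (classic (b = a)) => [->|hba]; first by exists 0 => b' [<-].
set m := sep_column a b.
have hAa : E3 (G A) (G (K a)) by apply/(G_red hA (LD_member K a)); apply: iso_sym.
have hne : ~ E0 (column (G A) m) (column (G (K b)) m).
  by move=> h; apply: (sep_columnP (nesym hba)); apply: E0_trans (E0_sym (hAa m)) h.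
have [n [hn hneq]] := not_E0_cofinal hne N.
have [s hs] := G_cont hA (pair m n).
by exists s => b' [<-] _; exists n; split=> //; exists (G A (pair m n)).
Qed.

Lemma E3_test_iso_inv A : LD K A -> forall a, (forall r, exists u, E3_test a r u A) -> iso (K a) A.
Proof.
move=> hA a Hall; have [b hb] := hA; case: (classic (b = a)) => [<-|hba].
  exact: iso_sym.
have hAb : E3 (G A) (G (K b)) by apply/(G_red hA (LD_member K b)).
have [N0 hN0] := hAb (sep_column a b).
have [u] := Hall (pair (pickle b) N0); rewrite /E3_test pairK.
move=> /(_ b (pickleK_inv b) hba) [n [hn [c [hc hs]]]].
by case: hc; rewrite -(hs A hA (restr_eq_refl A)); apply: hN0.
Qed.

End E3Learnable.

Lemma E3_learnable_PL_learnable (k : nat) (ar : 'I_k -> nat) (I : countType)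
    (K : I -> structure ar) : is_family K -> E_learnable E3 K -> PL_learnable K.
Proof.
move=> fam [G [Gc Gr]]; apply: (@pi2_PL_learnable _ _ _ K (E3_test K G)).
- exact: E3_test_local.
- exact: E3_test_mono.
- move=> A hA a; split; [exact: E3_test_iso | exact: E3_test_iso_inv].
Qed.

(** * Coloured matchings *)

Record cgraph := CGraph { col : nat -> nat; edge : nat -> nat -> bool }.

Definition sig4 : 'I_4 -> nat := fun _ => 2.
Definition fst2 : 'I_2 := @Ordinal 2 0 isT.
Definition snd2 : 'I_2 := @Ordinal 2 1 isT.

(* Relation i < 3 says that the first entry has colour i (colour 3 is the
   complement of the three), relation 3 is the edge relation. *)
Definition cg_str (Z : cgraph) : structure sig4 :=
  fun i t => if val i < 3 then col Z (t fst2) == val i else edge Z (t fst2) (t snd2).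

(* Points of colour 2 ("witnesses") are matched injectively to points of
   colour 0 or 3 ("anchors"); points of colour 1 are "counters". *)
Record cg_wf (Z : cgraph) : Prop := CgWf {
  col_le3 : forall x, col Z x <= 3;
  witness_matched : forall x, col Z x = 2 -> exists2 e, e < x & edge Z e x;
  edge_anchor : forall x w, edge Z x w -> (col Z x == 0) || (col Z x == 3);
  edge_witness : forall x w, edge Z x w -> col Z w = 2;
  edge_funct : forall x w w', edge Z x w -> edge Z x w' -> w = w';
  edge_inj : forall x x' w, edge Z x w -> edge Z x' w -> x = x' }.

Arguments witness_matched {Z} _ {x}.
Arguments edge_anchor {Z} _ {x w}.
Arguments edge_witness {Z} _ {x w}.
Arguments edge_funct {Z} _ {x w w'}.
Arguments edge_inj {Z} _ {x x' w}.

Section Kinds.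
Variable Z : cgraph.

Definition has_edge x : bool := asb (exists w, edge Z x w).

(* 0: counter; 1, 2: anchor of colour 0 with, without a witness;
   3, 4: the same for colour 3; 5: witness. *)
Definition kind x : nat :=
  if col Z x == 1 then 0 else if col Z x == 2 then 5 else
  if col Z x == 0 then (if has_edge x then 1 else 2) else (if has_edge x then 3 else 4).

Definition kind_count c z := count (fun y => kind y == c) (iota 0 z).
Definition kind_rank x := kind_count (kind x) x.
Definition has_kind_rank c r := exists x, kind x = c /\ kind_rank x = r.

Lemma kind_countS c z : kind_count c z.+1 = kind_count c z + (kind z == c).
Proof. by rewrite /kind_count -addn1 iotaD count_cat /= addn0. Qed.

Lemma kind_count_mono c z z' : z <= z' -> kind_count c z <= kind_count c z'.
Proof.
move=> h; rewrite -(subnKC h); elim: (z' - z) => [|d IH]; first by rewrite addn0.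
by rewrite addnS kind_countS; lia.
Qed.

Lemma kind_rank_lt x z : x < z -> kind_rank x < kind_count (kind x) z.
Proof. by move=> h; have := kind_count_mono (kind x) h; rewrite kind_countS eqxx /kind_rank; lia. Qed.

Lemma kind_rank_inj x y : kind x = kind y -> kind_rank x = kind_rank y -> x = y.
Proof.
move=> hk hr; case: (ltngtP x y) => // h; have h1 := kind_rank_lt h.
- by rewrite /kind_rank hk in h1 hr; rewrite hr in h1; lia.
- by rewrite /kind_rank -hk in h1 hr; rewrite hr in h1; lia.
Qed.

Lemma has_kind_rank_below c z r : r < kind_count c z -> has_kind_rank c r.
Proof.
elim: z => [|z IH] //; rewrite kind_countS => h.
case: (ltnP r (kind_count c z)) => h2; first exact: IH.
case E: (kind z == c) h => h; last by rewrite addn0 in h; lia.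
by exists z; move/eqP: E => E; rewrite /kind_rank E; split=> //; lia.
Qed.

Lemma has_kind_rank_cofinal c : (forall M, exists x, M <= x /\ kind x = c) ->
  forall r, has_kind_rank c r.
Proof.
move=> H r; suff [z hz] : exists z, r < kind_count c z by apply: has_kind_rank_below hz.
elim: r => [|r [z hz]].
- by have [x [_ hx]] := H 0; exists x.+1; rewrite kind_countS hx eqxx /=; lia.
- have [x [hzx hx]] := H z; exists x.+1; rewrite kind_countS hx eqxx /=.
  by have := kind_count_mono c hzx; lia.
Qed.

Lemma kind_counter x : (kind x == 0) = (col Z x == 1).
Proof. by rewrite /kind; case: (col Z x) => [|[|[|c]]] //=; case: has_edge. Qed.

Lemma kind_witness x : (kind x == 5) = (col Z x == 2).
Proof. by rewrite /kind; case: (col Z x) => [|[|[|c]]] //=; case: has_edge. Qed.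

Lemma kind_lt5 x : col Z x != 2 -> kind x < 5.
Proof. by rewrite /kind; case: (col Z x) => [|[|[|c]]] //= _; case: has_edge. Qed.

Definition matched_kind c := if c == 0 then 1 else 3.
Definition lone_kind c := if c == 0 then 2 else 4.

Lemma kind_matched x c : (c == 0) || (c == 3) -> col Z x = c ->
  (exists w, edge Z x w) -> kind x = matched_kind c.
Proof.
move=> hc hx /asbP hm; rewrite /kind hx /has_edge hm /matched_kind.
by case/orP: hc => /eqP ->.
Qed.

Lemma kind_lone x c : (c == 0) || (c == 3) -> col Z x = c ->
  (forall w, ~~ edge Z x w) -> kind x = lone_kind c.
Proof.
move=> hc hx hm; have hne : has_edge x = false.
  by apply/asbP => -[w hw]; move: (hm w); rewrite hw.
by rewrite /kind hx hne /lone_kind; case/orP: hc => /eqP ->.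
Qed.

Lemma lone_kindP x c : col Z x <= 3 -> (c == 0) || (c == 3) -> kind x = lone_kind c ->
  col Z x = c /\ forall w, ~~ edge Z x w.
Proof.
move=> hle hc; rewrite /kind /lone_kind; case E: (has_edge x); move: hle;
  case: (col Z x) => [|[|[|[|p]]]] /=; case/orP: hc => /eqP -> //=.
all: by move=> _ _; split=> // w; apply/negP => hw; move: E; rewrite /has_edge;
  case: asbP => // -[]; exists w.
Qed.

Hypothesis wf : cg_wf Z.

Lemma col_of_kind x : col Z x = match kind x with 0 => 1 | 1 | 2 => 0 | 5 => 2 | _ => 3 end.
Proof.
rewrite /kind; have := col_le3 wf x.
by case: (col Z x) => [|[|[|[|c]]]] //= _; case: has_edge.
Qed.

Lemma anchor_kind x w : edge Z x w -> (kind x == 1) || (kind x == 3).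
Proof.
move=> h; have hm : has_edge x by apply/asbP; exists w.
by rewrite /kind hm; case/orP: (edge_anchor wf h) => /eqP ->.
Qed.

Lemma anchor_not_witness x w : edge Z x w -> col Z x != 2.
Proof. by move/(edge_anchor wf); case/orP => /eqP ->. Qed.

Lemma matched_of_kind x : (kind x == 1) || (kind x == 3) -> exists w, edge Z x w.
Proof.
rewrite /kind /has_edge; case: asbP => // _.
by case: (col Z x) => [|[|[|c]]].
Qed.

End Kinds.

Definition anchor (Z : cgraph) w := epsilon (inhabits 0) (fun e => edge Z e w).
Definition witness (Z : cgraph) e := epsilon (inhabits 0) (fun w => edge Z e w).

Lemma anchorP Z w : cg_wf Z -> col Z w = 2 -> edge Z (anchor Z w) w.
Proof.
move=> wf h; apply: (epsilon_spec (inhabits 0) (fun e => edge Z e w)).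
by have [e _ he] := witness_matched wf h; exists e.
Qed.

Lemma witnessP Z e : (exists w, edge Z e w) -> edge Z e (witness Z e).
Proof. exact: (epsilon_spec (inhabits 0) (fun w => edge Z e w)). Qed.

(** * Coloured matchings are classified by their kind counts *)

Section KindMap.
Variables Z Z' : cgraph.
Hypotheses (wf : cg_wf Z) (wf' : cg_wf Z').
Hypothesis kinds_sub : forall c r, c < 5 -> has_kind_rank Z c r -> has_kind_rank Z' c r.

Definition rank_match x := epsilon (inhabits 0)
  (fun x' => kind Z' x' = kind Z x /\ kind_rank Z' x' = kind_rank Z x).

Definition kind_map x :=
  if col Z x == 2 then witness Z' (rank_match (anchor Z x)) else rank_match x.

Lemma rank_matchP x : col Z x != 2 ->
  kind Z' (rank_match x) = kind Z x /\ kind_rank Z' (rank_match x) = kind_rank Z x.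
Proof.
move=> h; apply: (epsilon_spec (inhabits 0)
  (fun x' => kind Z' x' = kind Z x /\ kind_rank Z' x' = kind_rank Z x)).
by apply: kinds_sub; [exact: kind_lt5 | exists x].
Qed.

Lemma kind_map_nonwitness x : col Z x != 2 -> kind_map x = rank_match x.
Proof. by move=> h; rewrite /kind_map (negbTE h). Qed.

Lemma kind_map_witness x : col Z x = 2 -> edge Z' (rank_match (anchor Z x)) (kind_map x).
Proof.
move=> hx; rewrite /kind_map hx eqxx; apply/witnessP/matched_of_kind => //.
have hp := anchorP wf hx.
by rewrite (rank_matchP (anchor_not_witness wf hp)).1; apply: anchor_kind hp.
Qed.

Lemma kind_map_kind x : kind Z' (kind_map x) = kind Z x.
Proof.
case: (eqVneq (col Z x) 2) => hx.
- have /eqP := edge_witness wf' (kind_map_witness hx); rewrite -kind_witness => /eqP ->.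
  by apply/esym/eqP; rewrite kind_witness hx.
- by rewrite kind_map_nonwitness //; apply: (rank_matchP hx).1.
Qed.

Lemma kind_map_col x : col Z' (kind_map x) = col Z x.
Proof. by rewrite (col_of_kind wf' (kind_map x)) (col_of_kind wf x) kind_map_kind. Qed.

End KindMap.

Section KindIso.
Variables Z Z' : cgraph.
Hypotheses (wf : cg_wf Z) (wf' : cg_wf Z').
Hypothesis same_kinds : forall c r, c < 5 -> has_kind_rank Z c r <-> has_kind_rank Z' c r.

Let sub : forall c r, c < 5 -> has_kind_rank Z c r -> has_kind_rank Z' c r.
Proof. by move=> c r hc; case: (same_kinds r hc). Qed.
Let sub' : forall c r, c < 5 -> has_kind_rank Z' c r -> has_kind_rank Z c r.
Proof. by move=> c r hc; case: (same_kinds r hc). Qed.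

Lemma rank_matchK x : col Z x != 2 -> kind_map Z' Z (rank_match Z Z' x) = x.
Proof.
move=> hx; have [k1 r1] := rank_matchP sub hx.
have hx' : col Z' (rank_match Z Z' x) != 2.
  by rewrite (col_of_kind wf') k1 -(col_of_kind wf).
rewrite kind_map_nonwitness //; have [k2 r2] := rank_matchP sub' hx'.
by apply: (kind_rank_inj (Z := Z)); rewrite ?k2 ?k1 ?r2 ?r1.
Qed.

Lemma kind_mapK : cancel (kind_map Z Z') (kind_map Z' Z).
Proof.
move=> x; case: (eqVneq (col Z x) 2) => hx; last by rewrite [kind_map Z Z' x]kind_map_nonwitness // rank_matchK.
have h1 := kind_map_witness wf sub hx.
have hw : col Z' (kind_map Z Z' x) = 2 := edge_witness wf' h1.
have hp := anchorP wf hx.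
have e1 : anchor Z' (kind_map Z Z' x) = rank_match Z Z' (anchor Z x).
  exact: (edge_inj wf' (anchorP wf' hw) h1).
rewrite /kind_map hw eqxx e1 -(kind_map_nonwitness Z (anchor_not_witness wf' h1)).
rewrite rank_matchK ?(anchor_not_witness wf hp) //.
by apply: (edge_funct wf _ hp); apply: witnessP; exists x.
Qed.

Lemma kind_map_edge x w : edge Z x w = edge Z' (kind_map Z Z' x) (kind_map Z Z' w).
Proof.
have inj := can_inj kind_mapK.
apply/idP/idP => h.
- have hw := edge_witness wf h; have hp := anchorP wf hw.
  rewrite -(edge_inj wf hp h) [kind_map Z Z' (anchor Z w)]kind_map_nonwitness.
    exact: (kind_map_witness wf sub hw).
  exact: (anchor_not_witness wf hp).
- have hw : col Z w = 2 by rewrite -(kind_map_col wf wf' sub); exact: (edge_witness wf' h).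
  have e := edge_inj wf' h (kind_map_witness wf sub hw).
  have hp := anchorP wf hw.
  have -> : x = anchor Z w.
    by apply: inj; rewrite e kind_map_nonwitness ?(anchor_not_witness wf hp).
  exact: hp.
Qed.

End KindIso.

Lemma cg_iso_of_kinds Z Z' : cg_wf Z -> cg_wf Z' ->
  (forall c r, c < 5 -> has_kind_rank Z c r <-> has_kind_rank Z' c r) ->
  iso (cg_str Z) (cg_str Z').
Proof.
move=> wf wf' hk; have hk' : forall c r, c < 5 -> has_kind_rank Z' c r <-> has_kind_rank Z c r.
  by move=> c r hc; apply: iff_sym; apply: hk.
exists (kind_map Z Z'); split.
  by exists (kind_map Z' Z); apply: kind_mapK.
move=> i t; rewrite /cg_str /=; case: ifP => _; last exact: kind_map_edge.
by rewrite (kind_map_col wf wf' (fun c r hc => proj1 (hk c r hc))).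
Qed.

(** * The separating family *)

Definition tail_col (r : nat) : nat :=
  match r with 0 => 0 | 1 => 2 | 2 => 0 | 3 => 3 | 4 => 2 | _ => 3 end.
Definition tail_edge (r : nat) : bool := (r == 0) || (r == 3).
Definition tail_kind (j : nat) : nat :=
  match j with 0 => 1 | 1 => 5 | 2 => 2 | 3 => 3 | 4 => 5 | _ => 4 end.

Definition cg_extend (Z : cgraph) (b e : nat) : cgraph :=
  CGraph (fun x => if x < b then col Z x else if x < b + e then 1
                   else tail_col ((x - (b + e)) %% 6))
         (fun x w => if x < b then (w < b) && edge Z x w
                     else (b + e <= x) && tail_edge ((x - (b + e)) %% 6) && (w == x.+1)).

Definition counters_below (Z : cgraph) n := count (fun y => col Z y == 1) (iota 0 n).

Lemma counters_below_le Z n : counters_below Z n <= n.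
Proof. by have := count_size (fun y => col Z y == 1) (iota 0 n); rewrite size_iota. Qed.

Section Extend.
Variables (Z : cgraph) (b e : nat).
Hypothesis wf : cg_wf Z.
Local Notation X := (cg_extend Z b e).

Lemma cg_extend_wf : cg_wf X.
Proof.
case: wf => p1 p2 p3 p4 p5 p6.
have tail_witness r : r < 6 -> tail_col r = 2 -> (r == 1) || (r == 4).
  by case: r => [|[|[|[|[|[|r]]]]]].
split=> /=.
- move=> x; case: ifP => hb; first exact: p1.
  by case: ifP => // _; case: (_ %% 6) => [|[|[|[|[|[|r]]]]]].
- move=> x; case: ifP => hb.
  + move=> h; have [y hy hr] := p2 x h; exists y => //.
    by have -> : y < b by lia.
  + case: ifP => // hbe /(tail_witness _ (@ltn_pmod (x - (b + e)) 6 isT)) hr.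
    exists x.-1; first by case/orP: hr => /eqP; lia.
    have -> : (x.-1 < b) = false by case/orP: hr => /eqP; lia.
    apply/andP; split; last by apply/eqP; case/orP: hr => /eqP; lia.
    apply/andP; split; first by case/orP: hr => /eqP; lia.
    by rewrite /tail_edge; case/orP: hr => /eqP ?; apply/orP; [left|right]; apply/eqP; lia.
- move=> x w; case: ifP => hb; first by case/andP => _; apply: p3.
  case/andP => /andP [h1 h2] _; have -> : (x < b + e) = false by lia.
  by move: h2; case: (_ %% 6) => [|[|[|[|[|[|r]]]]]].
- move=> x w; case: ifP => hb; first by case/andP => hw h; rewrite hw; apply: p4 h.
  case/andP => /andP [h1 h2] /eqP ->; have -> : (x.+1 < b) = false by lia.
  have -> : (x.+1 < b + e) = false by lia.
  have -> : (x.+1 - (b + e)) %% 6 = ((x - (b + e)) %% 6).+1.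
    by move: h2; rewrite /tail_edge; case/orP => /eqP; lia.
  by move: h2; case: (_ %% 6) => [|[|[|[|[|[|r]]]]]].
- move=> x w w'; case: ifP => hb.
  + by case/andP => _ h /andP [_ h']; apply: p5 h h'.
  + by case/andP => _ /eqP -> /andP [_ /eqP ->].
- move=> x x' w; case: ifP => hb; case: ifP => hb'.
  + by case/andP => _ h /andP [_ h']; apply: p6 h h'.
  + by case/andP => hw _ /andP [/andP [h1 _] /eqP h3]; lia.
  + by case/andP => /andP [h1 _] /eqP h3 /andP [hw _]; lia.
  + by case/andP => _ /eqP -> /andP [_ /eqP]; lia.
Qed.

Lemma cg_extend_col_tail q j : j < 6 -> col X (b + e + 6 * q + j) = tail_col j.
Proof.
move=> hj /=; have -> : (b + e + 6 * q + j < b) = false by lia.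
have -> : (b + e + 6 * q + j < b + e) = false by lia.
by have -> : (b + e + 6 * q + j - (b + e)) %% 6 = j by lia.
Qed.

Lemma cg_extend_edge_tail q j w : j < 6 ->
  edge X (b + e + 6 * q + j) w = tail_edge j && (w == (b + e + 6 * q + j).+1).
Proof.
move=> hj /=; have -> : (b + e + 6 * q + j < b) = false by lia.
have -> : (b + e + 6 * q + j - (b + e)) %% 6 = j by lia.
by have -> : (b + e <= b + e + 6 * q + j) = true by lia.
Qed.

Lemma cg_extend_kind_tail q j : j < 6 -> kind X (b + e + 6 * q + j) = tail_kind j.
Proof.
move=> hj; have hm : has_edge X (b + e + 6 * q + j) = tail_edge j.
  apply/asbP/idP => [[w]|h]; first by rewrite cg_extend_edge_tail // => /andP [].
  by exists (b + e + 6 * q + j).+1; rewrite cg_extend_edge_tail // h eqxx.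
rewrite /kind hm cg_extend_col_tail //.
by case: j hj {hm} => [|[|[|[|[|[|j]]]]]].
Qed.

Lemma cg_extend_counter x : col X x = 1 -> x < b + e.
Proof.
rewrite /=; case: ifP => hb; first by lia.
by case: ifP => // _; case: (_ %% 6) => [|[|[|[|[|[|r]]]]]].
Qed.

Lemma cg_extend_count_counters : kind_count X 0 (b + e) = counters_below Z b + e.
Proof.
rewrite /kind_count (eq_count (a2 := fun y => col X y == 1)); last by move=> y; rewrite kind_counter.
rewrite iotaD count_cat /counters_below; congr (_ + _).
- by apply: eq_in_count => y; rewrite mem_iota /= => hy; rewrite ifT //; lia.
- rewrite (eq_in_count (a2 := predT)); first by rewrite count_predT size_iota.
  move=> y; rewrite mem_iota /= => hy; rewrite ifF; last by lia.
  by rewrite ifT //; lia.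
Qed.

Lemma cg_extend_kind0 r : has_kind_rank X 0 r <-> r < counters_below Z b + e.
Proof.
rewrite -cg_extend_count_counters; split; last exact: has_kind_rank_below.
case=> x [hk hr]; have /eqP hc : col X x == 1 by rewrite -kind_counter hk.
by have := kind_rank_lt X (cg_extend_counter hc); rewrite hk hr.
Qed.

Lemma cg_extend_kind_anchor c r : 1 <= c <= 4 -> has_kind_rank X c r.
Proof.
move=> hc; apply: has_kind_rank_cofinal => M.
have [j [hj hk]] : exists j, j < 6 /\ tail_kind j = c.
  by case: c hc => [|[|[|[|[|c]]]]] //= _; [exists 0|exists 2|exists 3|exists 5].
by exists (b + e + 6 * M + j); split; [lia | rewrite cg_extend_kind_tail].
Qed.

End Extend.

Definition counters : cgraph := CGraph (fun _ => 1) (fun _ _ => false).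

Lemma counters_wf : cg_wf counters.
Proof. by split. Qed.

Definition fin_cg (n : nat) : cgraph := cg_extend counters 0 n.

Lemma fin_cg_wf n : cg_wf (fin_cg n).
Proof. exact: cg_extend_wf counters_wf. Qed.

(* [tc t] is the colour of the anchors that are never lone in [inf_cg t]. *)
Definition tc (t : bool) := if t then 0 else 3.
Definition nc (t : bool) := if t then 3 else 0.
Definition inf_col t (r : nat) : nat :=
  match r with 0 => 1 | 1 => tc t | 2 => 2 | 3 => nc t | 4 => 2 | _ => nc t end.
Definition inf_edge (r : nat) : bool := (r == 1) || (r == 3).
Definition inf_kind t (j : nat) : nat :=
  match j with
  | 0 => 0 | 1 => matched_kind (tc t) | 2 => 5 | 3 => matched_kind (nc t) | 4 => 5
  | _ => lone_kind (nc t) end.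

Definition inf_cg (t : bool) : cgraph :=
  CGraph (fun x => inf_col t (x %% 6)) (fun x w => inf_edge (x %% 6) && (w == x.+1)).

Lemma tc_anchor t : (tc t == 0) || (tc t == 3). Proof. by case: t. Qed.
Lemma nc_anchor t : (nc t == 0) || (nc t == 3). Proof. by case: t. Qed.

Lemma inf_cg_wf t : cg_wf (inf_cg t).
Proof.
have hm x : x %% 6 < 6 by exact: (@ltn_pmod x 6 isT).
split=> /=.
- by move=> x; move: (hm x); case: (_ %% 6) => [|[|[|[|[|[|r]]]]]] //= _; case: t.
- move=> x; move: (hm x); case E: (x %% 6) => [|[|[|[|[|[|r]]]]]] //= _; try by case: t.
  + move=> _; exists x.-1; first by lia.
    by apply/andP; split; [have -> : x.-1 %% 6 = 1 by lia | apply/eqP; lia].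
  + move=> _; exists x.-1; first by lia.
    by apply/andP; split; [have -> : x.-1 %% 6 = 3 by lia | apply/eqP; lia].
- by move=> x w; move: (hm x); case: (_ %% 6) => [|[|[|[|[|[|r]]]]]] //= _; case: t.
- move=> x w /andP [h /eqP ->]; move: h; rewrite /inf_edge; case/orP=> /eqP h.
  + by have -> : x.+1 %% 6 = 2 by lia.
  + by have -> : x.+1 %% 6 = 4 by lia.
- by move=> x w w' /andP [_ /eqP ->] /andP [_ /eqP ->].
- by move=> x x' w /andP [_ /eqP ->] /andP [_ /eqP]; lia.
Qed.

Lemma inf_cg_kind t q j : j < 6 -> kind (inf_cg t) (6 * q + j) = inf_kind t j.
Proof.
move=> hj; have hr : (6 * q + j) %% 6 = j by lia.
have hmat : has_edge (inf_cg t) (6 * q + j) = inf_edge j.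
  apply/asbP/idP => [[w /andP [h _]]|h]; first by rewrite -hr.
  by exists (6 * q + j).+1; rewrite /= hr h eqxx.
rewrite /kind hmat /= hr.
by case: j hj {hr hmat} => [|[|[|[|[|[|j]]]]]] //= _; case: t.
Qed.

Lemma inf_cg_no_lone t x : kind (inf_cg t) x != lone_kind (tc t).
Proof.
have hj : x %% 6 < 6 by exact: (@ltn_pmod x 6 isT).
rewrite (divn_eq x 6) mulnC inf_cg_kind //.
by case: (x %% 6) hj => [|[|[|[|[|[|r]]]]]] //= _; case: t.
Qed.

Lemma inf_cg_kinds t c r : c < 5 -> has_kind_rank (inf_cg t) c r <-> c != lone_kind (tc t).
Proof.
move=> hc; split.
  by case=> x [<- _]; apply: inf_cg_no_lone.
move=> hne; apply: has_kind_rank_cofinal => M.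
have [j [hj hk]] : exists j, j < 6 /\ inf_kind t j = c.
  case: t hne; case: c hc => [|[|[|[|[|c]]]]] //= _ _;
  first [exists 0; by [] | exists 1; by [] | exists 3; by [] | exists 5; by []].
by exists (6 * M + j); split; [lia | rewrite inf_cg_kind].
Qed.

(* Codes 0 and 1 are the two structures with infinitely many counters, code
   n.+2 the one with exactly n counters. *)
Definition sep_family_cg (a : nat) : cgraph :=
  match a with 0 => inf_cg true | 1 => inf_cg false | n.+2 => fin_cg n end.
Definition sep_family (a : nat) : structure sig4 := cg_str (sep_family_cg a).

Lemma sep_family_cg_wf a : cg_wf (sep_family_cg a).
Proof. by case: a => [|[|n]]; [exact: inf_cg_wf | exact: inf_cg_wf | exact: fin_cg_wf]. Qed.

Lemma gadget_kinds_cover t c : c < 5 -> c != lone_kind (tc t) ->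
  [\/ c = 0, c = matched_kind (tc t), c = lone_kind (nc t) | c = matched_kind (nc t)].
Proof. by case: t; case: c => [|[|[|[|[|c]]]]] //= _ _; constructor. Qed.

Definition sym0 : 'I_4 := @Ordinal 4 0 isT.
Definition sym1 : 'I_4 := @Ordinal 4 1 isT.
Definition sym2 : 'I_4 := @Ordinal 4 2 isT.
Definition sym_edge : 'I_4 := @Ordinal 4 3 isT.
Definition pt2 (x y : nat) : 'I_2 -> nat := fun j => if val j == 0 then x else y.

Lemma iso_pt2 (A B : structure sig4) f :
  (forall (i : 'I_4) (t : 'I_(sig4 i) -> nat), A i t = B i (f \o t)) ->
  forall i x y, A i (pt2 x y) = B i (pt2 (f x) (f y)).
Proof.
move=> h i x y; rewrite h; congr (B i _); apply: functional_extensionality => j /=.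
by rewrite /pt2; case: ifP.
Qed.

Lemma restr_eq_pt2 u (A B : structure sig4) i x y : restr_eq u A B -> x <= u -> y <= u ->
  A i (pt2 x y) = B i (pt2 x y).
Proof. by move=> h hx hy; apply: h => j; rewrite /pt2; case: ifP. Qed.

Definition colour3 (A : structure sig4) x :=
  ~~ A sym0 (pt2 x x) && ~~ A sym1 (pt2 x x) && ~~ A sym2 (pt2 x x).
Definition has_lone0 (A : structure sig4) :=
  exists x, A sym0 (pt2 x x) /\ forall w, ~~ A sym_edge (pt2 x w).
Definition has_lone3 (A : structure sig4) :=
  exists x, colour3 A x /\ forall w, ~~ A sym_edge (pt2 x w).
Definition has_counters (A : structure sig4) j :=
  exists s, [/\ uniq s, size s = j & all (fun x => A sym1 (pt2 x x)) s].

Lemma has_lone0_iso A B : iso A B -> has_lone0 A -> has_lone0 B.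
Proof.
case=> f [[g fK gK] h] [x [h1 h2]].
by exists (f x); rewrite -(iso_pt2 h); split=> // w; rewrite -(gK w) -(iso_pt2 h).
Qed.

Lemma has_lone3_iso A B : iso A B -> has_lone3 A -> has_lone3 B.
Proof.
case=> f [[g fK gK] h] [x [h1 h2]].
by exists (f x); rewrite /colour3 -!(iso_pt2 h); split=> // w; rewrite -(gK w) -(iso_pt2 h).
Qed.

Lemma has_counters_iso A B j : iso A B -> has_counters A j -> has_counters B j.
Proof.
case=> f [bf h] [s [h1 h2 h3]]; exists (map f s); split.
- by rewrite map_inj_uniq //; apply: bij_inj.
- by rewrite size_map.
- by apply/allP => y /mapP [x hx ->]; rewrite -(iso_pt2 h); apply: (allP h3).
Qed.

Lemma has_lone0_cg Z : has_lone0 (cg_str Z) <-> exists x, col Z x = 0 /\ forall w, ~~ edge Z x w.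
Proof. by split; case=> x [h1 h2]; exists x; split=> //; apply/eqP. Qed.

Lemma has_lone3_cg Z : cg_wf Z ->
  (has_lone3 (cg_str Z) <-> exists x, col Z x = 3 /\ forall w, ~~ edge Z x w).
Proof.
move=> wf; split; case=> x [h1 h2]; exists x; split=> //; last by rewrite /colour3 /cg_str /= h1.
move: h1; rewrite /colour3 /cg_str /=; have := col_le3 wf x.
by case: (col Z x) => [|[|[|[|c]]]] //=; lia.
Qed.

Lemma inf_cg_lone t x : (forall w, ~~ edge (inf_cg t) x w) -> col (inf_cg t) x != tc t.
Proof.
move=> /(_ x.+1); have hj : x %% 6 < 6 by exact: (@ltn_pmod x 6 isT).
rewrite /= eqxx andbT /inf_edge.
by case: (x %% 6) hj => [|[|[|[|[|[|r]]]]]] //= _ _; case: t.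
Qed.

Lemma sep_family_lone0 a : has_lone0 (sep_family a) <-> a != 0.
Proof.
rewrite /sep_family has_lone0_cg; case: a => [|[|n]]; split => //.
- by case=> x [h1 h2]; have := @inf_cg_lone true x h2; rewrite h1.
- by move=> _; exists 5; split.
- move=> _; exists (0 + n + 6 * 0 + 2); rewrite cg_extend_col_tail //.
  by split=> // w; rewrite cg_extend_edge_tail.
Qed.

Lemma sep_family_lone3 a : has_lone3 (sep_family a) <-> a != 1.
Proof.
rewrite /sep_family has_lone3_cg; last exact: sep_family_cg_wf.
case: a => [|[|n]]; split => //.
- by move=> _; exists 5; split.
- by case=> x [h1 h2]; have := @inf_cg_lone false x h2; rewrite h1.
- move=> _; exists (0 + n + 6 * 0 + 5); rewrite cg_extend_col_tail //.
  by split=> // w; rewrite cg_extend_edge_tail.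
Qed.

Lemma sep_family_counters a j : has_counters (sep_family a) j <-> (if a is n.+2 then j <= n else True).
Proof.
case: a => [|[|n]]; rewrite /sep_family /=.
1,2: split=> // _; exists (map (fun i => 6 * i) (iota 0 j)); split.
1,4: by rewrite map_inj_uniq ?iota_uniq // => x y; lia.
1,3: by rewrite size_map size_iota.
1,2: by apply/allP => y /mapP [x _ ->]; rewrite /cg_str /=; have -> : (6 * x) %% 6 = 0 by lia.
split.
- case=> s [h1 <- h3]; rewrite -(size_iota 0 n); apply: uniq_leq_size => // x hx.
  have /eqP hc : col (fin_cg n) x == 1 by apply: (allP h3).
  by rewrite mem_iota /= add0n; have := @cg_extend_counter counters 0 n x hc.
- move=> h; exists (iota 0 j); split; first exact: iota_uniq.
  + by rewrite size_iota.
  + apply/allP => x; rewrite mem_iota /= add0n => hx; rewrite /cg_str /=.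
    by have -> : x < n by lia.
Qed.

Definition sep_family_type (a : nat) (A : structure sig4) : Prop :=
  match a with
  | 0 => ~ has_lone0 A
  | 1 => ~ has_lone3 A
  | n.+2 => has_counters A n /\ ~ has_counters A n.+1
  end.

Lemma sep_family_type_iso a A B : iso A B -> sep_family_type a A -> sep_family_type a B.
Proof.
move=> h; have h' := iso_sym h; case: a => [|[|n]] /=.
- by move=> hn hb; apply: hn; apply: has_lone0_iso h' hb.
- by move=> hn hb; apply: hn; apply: has_lone3_iso h' hb.
- case=> h1 h2; split; first exact: has_counters_iso h h1.
  by move=> h3; apply: h2; apply: has_counters_iso h' h3.
Qed.

Lemma sep_family_type_family a b : sep_family_type a (sep_family b) <-> a = b.
Proof.
split; last first.
- move=> <-; case: a => [|[|n]] /=.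
  + by move=> /(proj1 (sep_family_lone0 0)).
  + by move=> /(proj1 (sep_family_lone3 1)).
  + split; first exact/(proj2 (sep_family_counters n.+2 n)).
    by move=> /(proj1 (sep_family_counters n.+2 n.+1)) /=; lia.
- case: a => [|[|n]] /=.
  + by case: b => [|b] h //; case: h; apply: (proj2 (sep_family_lone0 b.+1)).
  + case: b => [|[|b]] h //; case: h.
    * exact: (proj2 (sep_family_lone3 0)).
    * exact: (proj2 (sep_family_lone3 b.+2)).
  + case=> /(proj1 (sep_family_counters b n)) h1 h2.
    have {}h2 : ~ (if b is m.+2 then n.+1 <= m else True).
      by move=> h; apply: h2; apply/(proj2 (sep_family_counters b n.+1)).
    by case: b h1 h2 => [|[|m]] //= h1 h2; have -> : n = m by lia.
Qed.

Lemma sep_family_is_family : is_family sep_family.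
Proof.
move=> a b h; apply/(sep_family_type_family a b); apply: sep_family_type_iso h _.
exact/sep_family_type_family.
Qed.

Definition has_counters_upto (A : structure sig4) j u :=
  exists s, [/\ uniq s, size s = j & all (fun x => (x <= u) && A sym1 (pt2 x x)) s].

Lemma has_counters_upto_local A B j u v : restr_eq u A B -> v <= u ->
  has_counters_upto A j v -> has_counters_upto B j v.
Proof.
move=> h hv [s [h1 h2 h3]]; exists s; split=> //; apply/allP => x hx.
case/andP: (allP h3 x hx) => hxv hc; rewrite hxv /=.
by rewrite -(restr_eq_pt2 _ h) //; lia.
Qed.

Lemma has_counters_uptoW A j u : has_counters_upto A j u -> has_counters A j.
Proof.
by case=> s [h1 h2 h3]; exists s; split=> //; apply/allP => x hx; case/andP: (allP h3 x hx).
Qed.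

Lemma has_counters_upto_eventually A j : has_counters A j ->
  exists u, forall v, u <= v -> has_counters_upto A j v.
Proof.
case=> s [h1 h2 h3]; exists (\max_(x <- s) x) => v hv; exists s; split=> //.
apply/allP => x hx; rewrite (allP h3 x hx) andbT.
by apply: leq_trans hv; apply: leq_bigmax_seq.
Qed.

Lemma eventually_matched (P : pred nat) (E : rel nat) :
  (forall r, exists u, r <= u /\ (P r -> exists2 w, w <= u & E r w)) <->
  ~ exists x, P x /\ forall w, ~~ E x w.
Proof.
split.
- move=> H [x [h1 h2]]; have [u [_ h]] := H x; have [w _ hw] := h h1.
  by move: (h2 w); rewrite hw.
- move=> hn r; case: (boolP (P r)) => hr; last by exists r; split=> //; rewrite (negbTE hr).
  have [w hw] : exists w, E r w.
    apply: NNPP => h; apply: hn; exists r; split=> // w; apply/negP => hw; apply: h; by exists w.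
  by exists (maxn r w); split; [lia | exists w => //; lia].
Qed.

Definition sep_family_test (a r u : nat) (A : structure sig4) : Prop :=
  match a with
  | 0 => r <= u /\ (A sym0 (pt2 r r) -> exists2 w, w <= u & A sym_edge (pt2 r w))
  | 1 => r <= u /\ (colour3 A r -> exists2 w, w <= u & A sym_edge (pt2 r w))
  | n.+2 => r <= u /\ has_counters_upto A n u /\ ~ has_counters_upto A n.+1 r
  end.

Lemma sep_family_test_local a r u A B : restr_eq u A B -> sep_family_test a r u A -> sep_family_test a r u B.
Proof.
move=> h; case: a => [|[|n]] /=.
- case=> hr H; split=> // hA; rewrite -(restr_eq_pt2 _ h) // in hA.
  by have [w hw hw'] := H hA; exists w => //; rewrite -(restr_eq_pt2 _ h).
- case=> hr H; split=> // hA; rewrite /colour3 -!(restr_eq_pt2 _ h) // in hA.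
  by have [w hw hw'] := H hA; exists w => //; rewrite -(restr_eq_pt2 _ h).
- case=> hr [h1 h2]; split=> //; split; first exact: has_counters_upto_local h (leqnn u) h1.
  by move=> h3; apply: h2; apply: has_counters_upto_local (restr_eq_sym h) hr h3.
Qed.

Lemma sep_family_test_mono a r u v A : u <= v -> sep_family_test a r u A -> sep_family_test a r v A.
Proof.
move=> huv; case: a => [|[|n]] /=.
1,2: case=> hr H; split=> [|hA]; [lia | by have [w hw hw'] := H hA; exists w => //; lia].
case=> hr [[s [h1 h2 h3]] h4]; split; first by lia.
split=> //; exists s; split=> //; apply/allP => x hx.
by case/andP: (allP h3 x hx) => hxu ->; rewrite andbT; lia.
Qed.

Lemma sep_family_test_type a A : (forall r, exists u, sep_family_test a r u A) <-> sep_family_type a A.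
Proof.
case: a => [|[|n]] /=.
- exact: (eventually_matched (fun x => A sym0 (pt2 x x)) (fun x w => A sym_edge (pt2 x w))).
- exact: (eventually_matched (colour3 A) (fun x w => A sym_edge (pt2 x w))).
- split.
  + move=> H; split; first by have [u [_ [h _]]] := H 0; apply: has_counters_uptoW h.
    move=> /has_counters_upto_eventually [u hu]; have [v [_ [_ h2]]] := H u.
    by apply: h2; apply: hu.
  + case=> /has_counters_upto_eventually [u hu] h2 r; exists (maxn r u).
    split; first by lia.
    by split; [apply: hu; lia | move/has_counters_uptoW].
Qed.

Lemma sep_family_PL_learnable : PL_learnable sep_family.
Proof.
apply: (@pi2_PL_learnable _ _ _ sep_family sep_family_test).
- exact: sep_family_test_local.
- exact: sep_family_test_mono.
- move=> A [b hb] a; rewrite sep_family_test_type; split.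
  + move=> h; have e : a = b by apply: sep_family_is_family; apply: iso_trans h hb.
    by subst b; apply: sep_family_type_iso (iso_sym hb) _; apply/sep_family_type_family.
  + move=> h; have e : a = b by apply/(sep_family_type_family a b); apply: sep_family_type_iso hb h.
    by subst b; apply: iso_sym.
Qed.

(** * Repairing a finite initial segment *)

Definition gadget_col (t : bool) (j : nat) : nat :=
  match j with 0 => 1 | 1 => tc t | 2 => 2 | 3 => nc t | 4 => nc t | 5 => 2 | _ => 1 end.

Ltac decide_ifs := repeat (first [rewrite ifT; [|by lia] | rewrite ifF; [|by lia]]).

Section Repair.
Variables (Z : cgraph) (s : nat) (t : bool).

Definition needs_witness e := (col Z e == tc t) && ~~ has (edge Z e) (iota 0 s.+1).

(* Beyond s, the point x + s + 1 is the missing witness of the tc-anchor x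
   (or a counter), and the gadget on [2s + 2, 2s + 7] provides a counter, a
   matched tc-anchor, a lone nc-anchor and a matched nc-anchor. *)
Definition repair : cgraph :=
  CGraph (fun x => if x <= s then col Z x
                   else if x <= s.*2.+1 then (if needs_witness (x - s.+1) then 2 else 1)
                   else gadget_col t (x - s.*2.+2))
         (fun x w => if x <= s then (if w <= s then edge Z x w
                                     else needs_witness x && (w == x + s.+1))
                     else ((x == s.*2 + 3) && (w == s.*2 + 4))
                          || ((x == s.*2 + 6) && (w == s.*2 + 7))).

Hypothesis wf : cg_wf Z.

Lemma repair_col_le3 x : col repair x <= 3.
Proof.
rewrite /=; case: ifP => h1; first exact: col_le3.
case: ifP => h2; first by case: needs_witness.
by case: (x - s.*2.+2) => [|[|[|[|[|[|j]]]]]] //=; case: t.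
Qed.

Lemma repair_witness_matched x : col repair x = 2 -> exists2 e, e < x & edge repair e x.
Proof.
rewrite /=; case: ifP => h1.
  by move=> h; have [e he hr] := witness_matched wf h; exists e => //=; decide_ifs.
case: ifP => h2.
  case E: (needs_witness (x - s.+1)) => // _; exists (x - s.+1); first by lia.
  by rewrite /=; decide_ifs; rewrite E /=; apply/eqP; lia.
have gadget_witness j : gadget_col t j = 2 -> (j == 2) || (j == 5).
  by case: t; case: j => [|[|[|[|[|[|j]]]]]].
move=> /gadget_witness /orP [] /eqP hj.
- exists (s.*2 + 3); first by lia.
  by rewrite /=; decide_ifs; apply/orP; left; apply/andP; split; apply/eqP; lia.
- exists (s.*2 + 6); first by lia.
  by rewrite /=; decide_ifs; apply/orP; right; apply/andP; split; apply/eqP; lia.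
Qed.

Lemma repair_edge_anchor x w : edge repair x w -> (col repair x == 0) || (col repair x == 3).
Proof.
rewrite /=; case: ifP => h1.
  case: ifP => h2; first exact: (edge_anchor wf).
  by case/andP => /andP [/eqP -> _] _; case: t.
case/orP => /andP [/eqP hx _]; subst x; decide_ifs.
- by rewrite (_ : s.*2 + 3 - s.*2.+2 = 1) ?tc_anchor //; lia.
- by rewrite (_ : s.*2 + 6 - s.*2.+2 = 4) ?nc_anchor //; lia.
Qed.

Lemma repair_edge_witness x w : edge repair x w -> col repair w = 2.
Proof.
rewrite /=; case: ifP => h1.
  case: ifP => h2; first by move=> h; decide_ifs; exact: (edge_witness wf h).
  case/andP => hn /eqP hw; subst w; decide_ifs.
  by rewrite (_ : x + s.+1 - s.+1 = x) ?hn //; lia.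
case/orP => /andP [_ /eqP hw]; subst w; decide_ifs.
- by have -> : s.*2 + 4 - s.*2.+2 = 2 by lia.
- by have -> : s.*2 + 7 - s.*2.+2 = 5 by lia.
Qed.

Lemma repair_edge_funct x w w' : edge repair x w -> edge repair x w' -> w = w'.
Proof.
rewrite /=; case: ifP => h1.
- have no_edge v : v <= s -> ~~ has (edge Z x) (iota 0 s.+1) -> ~~ edge Z x v.
    by move=> hv /hasPn; apply; rewrite mem_iota; lia.
  case: ifP => h2; case: ifP => h3.
  + exact: (edge_funct wf).
  + by move=> hr /andP [/andP [_ /(no_edge _ h2)]]; rewrite hr.
  + by move=> /andP [/andP [_ /(no_edge _ h3) /negbTE ->]].
  + by move=> /andP [_ /eqP ->] /andP [_ /eqP ->].
- by case/orP => /andP [/eqP hx /eqP ->] /orP [] /andP [/eqP hx' /eqP ->]; lia.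
Qed.

Lemma repair_edge_inj x x' w : edge repair x w -> edge repair x' w -> x = x'.
Proof.
rewrite /=; case: (leqP x s) => h1; case: (leqP x' s) => h2; case: (leqP w s) => h3; decide_ifs.
- exact: (edge_inj wf).
- by move=> /andP [_ /eqP hw] /andP [_ /eqP hw']; lia.
- by move=> _ /orP [] /andP [_ /eqP]; lia.
- by move=> /andP [_ /eqP hw] /orP [] /andP [_ /eqP]; lia.
- by move=> /orP [] /andP [_ /eqP]; lia.
- by move=> /orP [] /andP [_ /eqP hw] /andP [_ /eqP]; lia.
- by move=> /orP [] /andP [/eqP hx /eqP hw] /orP [] /andP [/eqP hx' /eqP hw']; lia.
- by move=> /orP [] /andP [/eqP hx /eqP hw] /orP [] /andP [/eqP hx' /eqP hw']; lia.
Qed.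

Lemma repair_wf : cg_wf repair.
Proof.
split; [exact: repair_col_le3 | exact: repair_witness_matched | exact: repair_edge_anchor
  | exact: repair_edge_witness | exact: repair_edge_funct | exact: repair_edge_inj].
Qed.

Lemma repair_matches_tc x : x <= s -> col Z x = tc t ->
  exists2 w, w <= s.*2 + 7 & edge repair x w.
Proof.
move=> hx hc; case: (boolP (has (edge Z x) (iota 0 s.+1))) => hh.
- case/hasP: hh => w; rewrite mem_iota => hw hr; exists w; first by lia.
  by rewrite /=; decide_ifs.
- exists (x + s.+1); first by lia.
  by rewrite /=; decide_ifs; rewrite /needs_witness hc eqxx hh eqxx.
Qed.

Lemma repair_keeps_lone x : x <= s -> col Z x != tc t ->
  (forall w, w <= s -> ~~ edge Z x w) -> forall w, ~~ edge repair x w.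
Proof.
move=> hx hc hw w; rewrite /= hx; case: ifP => h; first exact: hw.
by rewrite /needs_witness (negbTE hc).
Qed.

Lemma repair_gadget_counter : col repair (s.*2 + 2) = 1.
Proof. by rewrite /=; decide_ifs; have -> : s.*2 + 2 - s.*2.+2 = 0 by lia. Qed.

Lemma repair_gadget_tc : col repair (s.*2 + 3) = tc t /\ edge repair (s.*2 + 3) (s.*2 + 4).
Proof.
split; rewrite /=; decide_ifs; last by rewrite !eqxx.
by have -> : s.*2 + 3 - s.*2.+2 = 1 by lia.
Qed.

Lemma repair_gadget_lone : col repair (s.*2 + 5) = nc t /\ forall w, ~~ edge repair (s.*2 + 5) w.
Proof.
split=> [|w]; rewrite /=; decide_ifs; first by have -> : s.*2 + 5 - s.*2.+2 = 3 by lia.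
by apply/negP => /orP [] /andP [/eqP h _]; lia.
Qed.

Lemma repair_gadget_nc : col repair (s.*2 + 6) = nc t /\ edge repair (s.*2 + 6) (s.*2 + 7).
Proof.
split; rewrite /=; decide_ifs; last by rewrite !eqxx orbT.
by have -> : s.*2 + 6 - s.*2.+2 = 4 by lia.
Qed.

End Repair.

(** * Limits of coherent sequences *)

Definition cg_agree (Z Z' : cgraph) s :=
  (forall x, x <= s -> col Z x = col Z' x) /\
  (forall x w, x <= s -> w <= s -> edge Z x w = edge Z' x w).

Lemma cg_agree_sym Z1 Z2 s : cg_agree Z1 Z2 s -> cg_agree Z2 Z1 s.
Proof. by case=> h1 h2; split=> *; [rewrite h1 | rewrite h2]. Qed.

Lemma cg_agree_trans Z1 Z2 Z3 s : cg_agree Z1 Z2 s -> cg_agree Z2 Z3 s -> cg_agree Z1 Z3 s.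
Proof. by case=> h1 h2 [h3 h4]; split=> *; [rewrite h1 ?h3 | rewrite h2 ?h4]. Qed.

Lemma cg_agree_mono Z1 Z2 s s' : s <= s' -> cg_agree Z1 Z2 s' -> cg_agree Z1 Z2 s.
Proof. by move=> hs [h1 h2]; split=> *; [apply: h1 | apply: h2]; lia. Qed.

Lemma cg_agree_restr_eq Z Z' s : cg_agree Z Z' s -> restr_eq s (cg_str Z) (cg_str Z').
Proof. by case=> h1 h2 i u hu; rewrite /cg_str; case: ifP => _; [rewrite h1 | rewrite h2]. Qed.

Lemma cg_extend_agree Z s e : cg_agree Z (cg_extend Z s.+1 e) s.
Proof. by split=> [x hx|x w hx hw] /=; decide_ifs; rewrite ?ltnS ?hw. Qed.

Lemma repair_agree Z s t : cg_agree Z (repair Z s t) s.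
Proof. by split=> [x hx|x w hx hw] /=; rewrite hx // hw. Qed.

Section Limit.
Variables (Zs : nat -> cgraph) (bound : nat -> nat).
Hypothesis Zs_wf : forall N, cg_wf (Zs N).
Hypothesis bound_lt : forall N, bound N < bound N.+1.
Hypothesis Zs_agree : forall N, cg_agree (Zs N) (Zs N.+1) (bound N).

Definition cg_limit : cgraph :=
  CGraph (fun x => col (Zs x) x) (fun x w => edge (Zs (maxn x w)) x w).

Lemma bound_mono M N : M <= N -> bound M <= bound N.
Proof.
move=> h; rewrite -(subnKC h); elim: (N - M) => [|d IH]; first by rewrite addn0.
by rewrite addnS; have := bound_lt (M + d); lia.
Qed.

Lemma bound_ge N : N <= bound N.
Proof. by elim: N => [|N IH] //; have := bound_lt N; lia. Qed.

Lemma Zs_agree_le M N : M <= N -> cg_agree (Zs M) (Zs N) (bound M).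
Proof.
move=> h; rewrite -(subnKC h); elim: (N - M) => [|d IH]; first by rewrite addn0.
rewrite addnS; apply: cg_agree_trans IH _; apply: cg_agree_mono (Zs_agree _).
exact: bound_mono (leq_addr _ _).
Qed.

Lemma cg_limit_agree N : cg_agree cg_limit (Zs N) (bound N).
Proof.
split.
- move=> x hx /=; case: (leqP x N) => h.
  + exact: (Zs_agree_le h).1 _ (bound_ge x).
  + by apply/esym; apply: (Zs_agree_le (ltnW h)).1 _ hx.
- move=> x w hx hw /=; case: (leqP (maxn x w) N) => h.
  + by apply: (Zs_agree_le h).2; have := bound_ge (maxn x w); lia.
  + by apply/esym; apply: (Zs_agree_le (ltnW h)).2.
Qed.

Lemma cg_limit_col N x : x <= bound N -> col cg_limit x = col (Zs N) x.
Proof. exact: (cg_limit_agree N).1. Qed.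

Lemma cg_limit_edge N x w : x <= bound N -> w <= bound N ->
  edge cg_limit x w = edge (Zs N) x w.
Proof. exact: (cg_limit_agree N).2. Qed.

Lemma cg_limit_wf : cg_wf cg_limit.
Proof.
have bg := bound_ge.
split.
- by move=> x; rewrite (cg_limit_col (bg x)); apply: col_le3.
- move=> x; rewrite (cg_limit_col (bg x)) => /(witness_matched (Zs_wf x)) [e he hr].
  by exists e; rewrite // (cg_limit_edge (N := x)) //; have := bg x; lia.
- move=> x w; have := bg (maxn x w).
  by move=> hb; rewrite (cg_limit_edge (N := maxn x w)) ?(cg_limit_col (N := maxn x w));
    try lia; apply: (edge_anchor (Zs_wf _)).
- move=> x w; have := bg (maxn x w).
  by move=> hb; rewrite (cg_limit_edge (N := maxn x w)) ?(cg_limit_col (N := maxn x w));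
    try lia; apply: (edge_witness (Zs_wf _)).
- move=> x w w'; set N := maxn x (maxn w w'); have := bg N => hb.
  by rewrite (cg_limit_edge (N := N) (w := w)) ?(cg_limit_edge (N := N) (w := w'));
    try lia; apply: (edge_funct (Zs_wf _)).
- move=> x x' w; set N := maxn w (maxn x x'); have := bg N => hb.
  by rewrite (cg_limit_edge (N := N) (x := x)) ?(cg_limit_edge (N := N) (x := x'));
    try lia; apply: (edge_inj (Zs_wf _)).
Qed.

End Limit.

Section Diagonal.
Variable G : structure sig4 -> nat -> nat.
Hypothesis G_cont : continuous_on_LD sep_family G.
Hypothesis G_red : forall A B, LD sep_family A -> LD sep_family B ->
  (iso A B <-> E3 (G A) (G B)).
Variables (t : bool) (m : nat).

Definition target := if t then 0 else 1.
Local Notation q := (column (G (sep_family target)) m).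
Hypothesis far_cofinal : forall N, exists n, N <= n /\ ~ E0 (column (G (sep_family n.+2)) m) q.

Definition far_index s := epsilon (inhabits 0)
  (fun n => s < n /\ ~ E0 (column (G (sep_family n.+2)) m) q).

Definition spoiler Z s := cg_extend Z s.+1 (far_index s - counters_below Z s.+1).

Definition spoil_point Z s N := epsilon (inhabits 0)
  (fun n => N <= n /\ G (cg_str (spoiler Z s)) (pair m n) <> q n).

Definition spoil_modulus Z s N := epsilon (inhabits 0)
  (fun u => forall B, LD sep_family B -> restr_eq u (cg_str (spoiler Z s)) B ->
     G B (pair m (spoil_point Z s N)) = G (cg_str (spoiler Z s)) (pair m (spoil_point Z s N))).

Definition cut Z s N := maxn (spoil_modulus Z s N) s.+1.

(* Each stage fixes a longer initial segment of the limit: the spoiler makes G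
   disagree with q at a point beyond N, continuity freezes this on [0, cut],
   and the repair steers the segment back towards the target. *)
Definition stage_step N (Zs : cgraph * nat) :=
  (repair (spoiler Zs.1 Zs.2) (cut Zs.1 Zs.2 N) t, (cut Zs.1 Zs.2 N).*2 + 7).

Fixpoint stage N := if N is N'.+1 then stage_step N' (stage N') else (counters, 0).

Lemma far_indexP s : s < far_index s /\ ~ E0 (column (G (sep_family (far_index s).+2)) m) q.
Proof.
apply: (epsilon_spec (inhabits 0) (fun n => s < n /\ ~ E0 (column (G (sep_family n.+2)) m) q)).
by have [n [h1 h2]] := far_cofinal s.+1; exists n.
Qed.

Lemma spoiler_iso Z s : cg_wf Z -> iso (cg_str (spoiler Z s)) (sep_family (far_index s).+2).
Proof.
move=> wf; apply: cg_iso_of_kinds; [exact: cg_extend_wf | exact: sep_family_cg_wf |].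
move=> [|c] r hc; last by split=> _; apply: cg_extend_kind_anchor; lia.
rewrite /= /fin_cg !cg_extend_kind0 (_ : counters_below counters 0 = 0) //.
by have := counters_below_le Z s.+1; have := (far_indexP s).1; lia.
Qed.

Lemma spoiler_LD Z s : cg_wf Z -> LD sep_family (cg_str (spoiler Z s)).
Proof. by move=> wf; exists (far_index s).+2; apply: spoiler_iso. Qed.

Lemma spoil_pointP Z s N : cg_wf Z ->
  N <= spoil_point Z s N /\ G (cg_str (spoiler Z s)) (pair m (spoil_point Z s N)) <> q (spoil_point Z s N).
Proof.
move=> wf; apply: (epsilon_spec (inhabits 0)
  (fun n => N <= n /\ G (cg_str (spoiler Z s)) (pair m n) <> q n)).
have h3 : E3 (G (cg_str (spoiler Z s))) (G (sep_family (far_index s).+2)).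
  by apply/(G_red (spoiler_LD s wf) (LD_member _ _)); apply: spoiler_iso.
have hne : ~ E0 (column (G (cg_str (spoiler Z s))) m) q.
  by move=> h; apply: (far_indexP s).2; apply: E0_trans (E0_sym (h3 m)) h.
by have [n [h1 h2]] := not_E0_cofinal hne N; exists n.
Qed.

Lemma spoil_modulusP Z s N : cg_wf Z -> forall B, LD sep_family B ->
  restr_eq (spoil_modulus Z s N) (cg_str (spoiler Z s)) B ->
  G B (pair m (spoil_point Z s N)) = G (cg_str (spoiler Z s)) (pair m (spoil_point Z s N)).
Proof.
move=> wf; apply: (epsilon_spec (inhabits 0) (fun u => forall B, LD sep_family B ->
  restr_eq u (cg_str (spoiler Z s)) B -> _ = _)).
exact: G_cont (spoiler_LD s wf) _.
Qed.

Lemma stage_wf N : cg_wf (stage N).1.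
Proof. by elim: N => [|N IH] /=; [exact: counters_wf | apply/repair_wf/cg_extend_wf]. Qed.

Lemma stage_bound_lt N : (stage N).2 < (stage N.+1).2.
Proof. by rewrite /= /cut; lia. Qed.

Lemma stage_agree N : cg_agree (stage N).1 (stage N.+1).1 (stage N).2.
Proof.
rewrite /=; apply: cg_agree_trans (cg_extend_agree _ _ _) _.
by apply: cg_agree_mono (repair_agree _ _ _); rewrite /cut; lia.
Qed.

Local Notation limit := (cg_limit (fun N => (stage N).1)).

Lemma limit_agree N : cg_agree limit (stage N).1 (stage N).2.
Proof. exact: cg_limit_agree stage_bound_lt stage_agree N. Qed.

Lemma limit_wf : cg_wf limit.
Proof. exact: cg_limit_wf stage_wf stage_bound_lt stage_agree. Qed.

Lemma stage_bound_ge N : N <= (stage N).2.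
Proof. exact: bound_ge stage_bound_lt N. Qed.

Lemma limit_no_lone_tc x : kind limit x != lone_kind (tc t).
Proof.
apply/negP => /eqP /(lone_kindP (col_le3 limit_wf x) (tc_anchor t)) [hc hw].
set Z := (stage x).1; set s := (stage x).2.
have hxs : x <= s := stage_bound_ge x.
have hcf : col (spoiler Z s) x = tc t.
  by rewrite -(cg_extend_agree Z s _).1 // -hc; apply/esym; apply: (limit_agree x).1.
have hxc : x <= cut Z s x by rewrite /cut; lia.
have [w hw1 hw2] := repair_matches_tc hxc hcf.
have e : (stage x.+1).1 = repair (spoiler Z s) (cut Z s x) t by [].
have := hw w; rewrite (limit_agree x.+1).2 ?e ?hw2 //= /cut; lia.
Qed.

Lemma lone_nc_persists M L : L <= (stage M).2 -> col (stage M).1 L = nc t ->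
  (forall w, ~~ edge (stage M).1 L w) ->
  forall K, M <= K -> col (stage K).1 L = nc t /\ forall w, ~~ edge (stage K).1 L w.
Proof.
move=> hL hc hw K hK; rewrite -(subnKC hK); elim: (K - M) => [|d [IH1 IH2]].
  by rewrite addn0.
rewrite addnS; set Z := (stage (M + d)).1 in IH1 IH2 *; set s := (stage (M + d)).2.
have hLs : L <= s.
  by apply: leq_trans hL _; apply: bound_mono stage_bound_lt _ _ (leq_addr _ _).
have hsc : s < cut Z s (M + d) by rewrite /cut; lia.
have e : (stage (M + d).+1).1 = repair (spoiler Z s) (cut Z s (M + d)) t by [].
split; first by rewrite -(stage_agree (M + d)).1.
rewrite e; apply: repair_keeps_lone.
- lia.
- by rewrite -(cg_extend_agree Z s _).1 // IH1; case: t.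
- by move=> w _; rewrite /= ifT ?(negbTE (IH2 w)) ?andbF //; lia.
Qed.

Lemma limit_gadget M : exists S, M <= S /\
  [/\ kind limit (S.*2 + 2) = 0, kind limit (S.*2 + 3) = matched_kind (tc t),
      kind limit (S.*2 + 5) = lone_kind (nc t) & kind limit (S.*2 + 6) = matched_kind (nc t)].
Proof.
set Z := (stage M).1; set s := (stage M).2; set S := cut Z s M.
have e : (stage M.+1).1 = repair (spoiler Z s) S t by [].
have lc L : L <= S.*2 + 7 -> col limit L = col (repair (spoiler Z s) S t) L.
  by move=> hL; rewrite -e; apply: (limit_agree M.+1).1.
have le L w : L <= S.*2 + 7 -> w <= S.*2 + 7 ->
    edge limit L w = edge (repair (spoiler Z s) S t) L w.
  by move=> hL hw; rewrite -e; apply: (limit_agree M.+1).2.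
have [lone_col lone_edge] := repair_gadget_lone (spoiler Z s) S t.
exists S; split; first by have := stage_bound_ge M; rewrite /S /cut; lia.
split.
- by apply/eqP; rewrite kind_counter lc ?repair_gadget_counter //; lia.
- apply: kind_matched (tc_anchor t) _ _; first by rewrite lc ?(repair_gadget_tc _ _ t).1 //; lia.
  by exists (S.*2 + 4); rewrite le ?(repair_gadget_tc _ _ t).2 //; lia.
- apply: kind_lone (nc_anchor t) _ _; first by rewrite lc //; lia.
  move=> w; have hK := stage_bound_ge (maxn M.+1 (maxn (S.*2 + 5) w)).
  rewrite (limit_agree (maxn M.+1 (maxn (S.*2 + 5) w))).2; try lia.
  have hL : S.*2 + 5 <= (stage M.+1).2.
    by rewrite (_ : (stage M.+1).2 = S.*2 + 7) //; lia.
  rewrite -e in lone_col lone_edge.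
  by case: (lone_nc_persists hL lone_col lone_edge (leq_maxl M.+1 (maxn (S.*2 + 5) w))).
- apply: kind_matched (nc_anchor t) _ _; first by rewrite lc ?(repair_gadget_nc _ _ t).1 //; lia.
  by exists (S.*2 + 7); rewrite le ?(repair_gadget_nc _ _ t).2 //; lia.
Qed.

Lemma limit_kinds c : c < 5 -> c != lone_kind (tc t) ->
  forall M, exists x, M <= x /\ kind limit x = c.
Proof.
move=> hc hne M; have [S [hS [k0 k1 k2 k3]]] := limit_gadget M.
case: (gadget_kinds_cover hc hne) => ->.
- by exists (S.*2 + 2); split=> //; lia.
- by exists (S.*2 + 3); split=> //; lia.
- by exists (S.*2 + 5); split=> //; lia.
- by exists (S.*2 + 6); split=> //; lia.
Qed.

Lemma limit_iso_target : iso (cg_str limit) (sep_family target).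
Proof.
have -> : sep_family target = cg_str (inf_cg t) by rewrite /target; case: t.
apply: cg_iso_of_kinds; [exact: limit_wf | exact: inf_cg_wf |].
move=> c r hc; rewrite inf_cg_kinds //; split.
- by case=> x [<- _]; apply: limit_no_lone_tc.
- by move=> hne; apply: has_kind_rank_cofinal; apply: limit_kinds.
Qed.

(* The limit is a copy of the target, yet at stage N0 continuity forces G to
   disagree with q beyond N0 on column m. *)
Lemma diagonal_false : False.
Proof.
have hLD : LD sep_family (cg_str limit) by exists target; apply: limit_iso_target.
have [N0 hN0] := proj1 (G_red hLD (LD_member sep_family target)) limit_iso_target m.
set Z := (stage N0).1; set s := (stage N0).2.
have [hn hneq] := spoil_pointP s N0 (stage_wf N0).
have hr : restr_eq (spoil_modulus Z s N0) (cg_str (spoiler Z s)) (cg_str limit).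
  apply: cg_agree_restr_eq; apply: cg_agree_mono (leq_maxl _ s.+1) _.
  apply: cg_agree_trans (repair_agree _ (cut Z s N0) t) _; apply: cg_agree_sym.
  apply: cg_agree_mono (limit_agree N0.+1).
  by rewrite (_ : (stage N0.+1).2 = (cut Z s N0).*2 + 7) //; lia.
by apply: hneq; rewrite -(spoil_modulusP (stage_wf N0) hLD hr); apply: hN0.
Qed.

End Diagonal.

Lemma sep_family_not_E3_learnable : ~ E_learnable E3 sep_family.
Proof.
case=> G [G_cont G_red].
have [m hm] : exists m, ~ E0 (column (G (sep_family 0)) m) (column (G (sep_family 1)) m).
  apply: not_E3_column => h.
  by have := sep_family_is_family (proj2 (G_red _ _ (LD_member _ 0) (LD_member _ 1)) h).
case: (classic (forall N, exists n, N <= n /\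
    ~ E0 (column (G (sep_family n.+2)) m) (column (G (sep_family 0)) m))) => H.
  exact: (@diagonal_false G G_cont G_red true m H).
apply: (@diagonal_false G G_cont G_red false m) => N.
have [N0 hN0] : exists N0, forall n, N0 <= n ->
    E0 (column (G (sep_family n.+2)) m) (column (G (sep_family 0)) m).
  apply: NNPP => h; apply: H => N'; apply: NNPP => h2; apply: h; exists N' => n hn.
  by apply: NNPP => h3; apply: h2; exists n.
exists (maxn N N0); split; first lia.
by move=> h; apply: hm; apply: E0_trans (E0_sym (hN0 _ _)) h; lia.
Qed.


Theorem mainTheorem19 :
  (forall (k : nat) (ar : 'I_k -> nat) (I : countType) (K : I -> structure ar),
      is_family K -> E_learnable E3 K -> PL_learnable K) /\
  (exists (k : nat) (ar : 'I_k -> nat) (I : countType) (K : I -> structure ar),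
      is_family K /\ PL_learnable K /\ ~ E_learnable E3 K).
Proof.
split; first exact: E3_learnable_PL_learnable.
exists 4, sig4, nat, sep_family.
split; first exact: sep_family_is_family.
split; [exact: sep_family_PL_learnable | exact: sep_family_not_E3_learnable].
Qed.
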